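(* Let $V^{10},V^{01}$ be nonzero Euclidean spaces and $S^{00},S^{10},S^{01},S^{11}$ nonzero Euclidean spaces such that $S^{00}\oplus S^{10}$ and $S^{01}\oplus S^{11}$ are $\mathrm{Cl}(V^{10})$-modules and $S^{00}\oplus S^{01}$ and $S^{10}\oplus S^{11}$ are $\mathrm{Cl}(V^{01})$-modules. Consider the rank 4 Clifford quasiNil-algebra $\mathcal N$ with $\mathcal N_{12}=V^{10},\mathcal N_{13}=S^{10},\mathcal N_{14}=S^{11},\mathcal N_{23}=S^{00},\mathcal N_{24}=S^{01},\mathcal N_{34}=V^{01}$ and products $\mu_{123}(v,s)=vs$, $\mu_{124}(v,s)=vs$, $\mu_{234}(s,w)=ws$, $\mu_{134}(s,w)=ws$. Then $\mathcal N$ is associative if and only if the actions of $V^{10}$ and $V^{01}$ on $S=S^{00}\oplus S^{10}\oplus S^{01}\oplus S^{11}$ commute, i.e. if and only if these actions extend to a $\mathbb Z/2\times\mathbb Z/2$-graded module structure on $S$ over $\mathrm{Cl}(V^{10})\otimes\mathrm{Cl}(V^{01})$ (ordinary tensor product, with $V^{10}$ of bidegree $(1,0)$ and $V^{01}$ of bidegree $(0,1)$). Conversely, every such bigraded module (with a metric making the four summands orthogonal and all elements of $V^{10}\cup V^{01}$ skew-symmetric) yields in this way an associative Clifford quasiNil-algebra.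
   Context: All spaces finite-dimensional real. $\mathrm{Cl}(X)$ is the Clifford algebra of a Euclidean space $X$ with $x\cdot x=-|x|^2$. A ''$\mathrm{Cl}(X)$-module $Y\oplus Z$'' is a $\mathbb Z/2$-graded module ($XY\subset Z$, $XZ\subset Y$) with a Euclidean metric with $Y\perp Z$ and each $x\in X$ skew-symmetric. A quasiNil-algebra of rank $n$: Euclidean space $\bigoplus_{i<j}\mathcal N_{ij}$ (orthogonal) with bilinear maps $\mu_{ijk}:\mathcal N_{ij}\times\mathcal N_{jk}\to\mathcal N_{ik}$ satisfying $|\mu_{ijk}(x,y)|=|x||y|$, and product $(AB)_{ik}=\sum_j\mu_{ijk}(a_{ij},b_{jk})$ on strictly upper triangular matrices $(a_{ij})$, $a_{ij}\in\mathcal N_{ij}$; associative means $(AB)C=A(BC)$ for all $A,B,C$. *)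

From HB Require Import structures.
From mathcomp Require Import all_boot all_order all_algebra.
From mathcomp Require Import reals.
Set Implicit Arguments. Unset Strict Implicit. Unset Printing Implicit Defensive.
Import Order.TTheory GRing.Theory Num.Theory.
Local Open Scope ring_scope.

(* A finite-dimensional Euclidean space of dimension n is modelled as 'rV[R]_n
   with the standard inner product. *)
Definition dot (R : realType) (n : nat) (u v : 'rV[R]_n) : R := (u *m v^T) 0 0.
Definition enorm (R : realType) (n : nat) (u : 'rV[R]_n) : R := Num.sqrt (dot u u).

(* A Cl(X)-module Y (+) Z, X = R^p, Y = R^m, Z = R^k (Y _|_ Z):
   x acts on y in Y by  y *m a x  (in Z) and on z in Z by  z *m b x  (in Y);
   x |-> action is linear, x.x = -|x|^2 on Y (+) Z, and each x is skew-symmetric. *)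
Definition cl_module (R : realType) (p m k : nat)
    (a : 'rV[R]_p -> 'M[R]_(m, k)) (b : 'rV[R]_p -> 'M[R]_(k, m)) : Prop :=
  [/\ (forall (c : R) x y, a (c *: x + y) = c *: a x + a y),
      (forall (c : R) x y, b (c *: x + y) = c *: b x + b y),
      (forall x, a x *m b x = (- dot x x) *: (1%:M : 'M[R]_m)),
      (forall x, b x *m a x = (- dot x x) *: (1%:M : 'M[R]_k)) &
      (forall x (y : 'rV[R]_m) (z : 'rV[R]_k), dot (y *m a x) z = - dot y (z *m b x))].

Definition bilinear_map (R : realType) (p q r : nat)
    (f : 'rV[R]_p -> 'rV[R]_q -> 'rV[R]_r) : Prop :=
  (forall (c : R) x x' y, f (c *: x + x') y = c *: f x y + f x' y) /\
  (forall (c : R) x y y', f x (c *: y + y') = c *: f x y + f x y').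

Definition norm_mult (R : realType) (p q r : nat)
    (f : 'rV[R]_p -> 'rV[R]_q -> 'rV[R]_r) : Prop :=
  forall x y, enorm (f x y) = enorm x * enorm y.

(* Rank-4 quasiNil-algebra: strictly upper triangular 4x4 "matrices"
   with entries a_ij in N_ij = R^(d_ij). *)
Record elt4 (R : realType) (d12 d13 d14 d23 d24 d34 : nat) := E4 {
  e12 : 'rV[R]_d12; e13 : 'rV[R]_d13; e14 : 'rV[R]_d14;
  e23 : 'rV[R]_d23; e24 : 'rV[R]_d24; e34 : 'rV[R]_d34 }.

Definition mul4 (R : realType) (d12 d13 d14 d23 d24 d34 : nat)
    (m123 : 'rV[R]_d12 -> 'rV[R]_d23 -> 'rV[R]_d13)
    (m124 : 'rV[R]_d12 -> 'rV[R]_d24 -> 'rV[R]_d14)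
    (m134 : 'rV[R]_d13 -> 'rV[R]_d34 -> 'rV[R]_d14)
    (m234 : 'rV[R]_d23 -> 'rV[R]_d34 -> 'rV[R]_d24)
    (A B : elt4 R d12 d13 d14 d23 d24 d34) : elt4 R d12 d13 d14 d23 d24 d34 :=
  E4 0 (m123 (e12 A) (e23 B))
       (m124 (e12 A) (e24 B) + m134 (e13 A) (e34 B))
       0 (m234 (e23 A) (e34 B)) 0.

Definition is_quasiNil4 (R : realType) (d12 d13 d14 d23 d24 d34 : nat)
    (m123 : 'rV[R]_d12 -> 'rV[R]_d23 -> 'rV[R]_d13)
    (m124 : 'rV[R]_d12 -> 'rV[R]_d24 -> 'rV[R]_d14)
    (m134 : 'rV[R]_d13 -> 'rV[R]_d34 -> 'rV[R]_d14)
    (m234 : 'rV[R]_d23 -> 'rV[R]_d34 -> 'rV[R]_d24) : Prop :=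
  [/\ bilinear_map m123, bilinear_map m124, bilinear_map m134 & bilinear_map m234] /\
  [/\ norm_mult m123, norm_mult m124, norm_mult m134 & norm_mult m234].

Definition associative4 (R : realType) (d12 d13 d14 d23 d24 d34 : nat)
    (m123 : 'rV[R]_d12 -> 'rV[R]_d23 -> 'rV[R]_d13)
    (m124 : 'rV[R]_d12 -> 'rV[R]_d24 -> 'rV[R]_d14)
    (m134 : 'rV[R]_d13 -> 'rV[R]_d34 -> 'rV[R]_d14)
    (m234 : 'rV[R]_d23 -> 'rV[R]_d34 -> 'rV[R]_d24) : Prop :=
  forall A B C : elt4 R d12 d13 d14 d23 d24 d34,
    mul4 m123 m124 m134 m234 (mul4 m123 m124 m134 m234 A B) C
    = mul4 m123 m124 m134 m234 A (mul4 m123 m124 m134 m234 B C).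

(* Actions on S = (S00 (+) S10) (+) (S01 (+) S11), as block matrices
   (row-vector convention: s |-> s *m M). *)
Definition actV10 (R : realType) (p n00 n10 n01 n11 : nat)
    (A1 : 'rV[R]_p -> 'M[R]_(n00, n10)) (B1 : 'rV[R]_p -> 'M[R]_(n10, n00))
    (A2 : 'rV[R]_p -> 'M[R]_(n01, n11)) (B2 : 'rV[R]_p -> 'M[R]_(n11, n01))
    (v : 'rV[R]_p) : 'M[R]_((n00 + n10) + (n01 + n11)) :=
  block_mx (block_mx 0 (A1 v) (B1 v) 0) 0 0 (block_mx 0 (A2 v) (B2 v) 0).

Definition actV01 (R : realType) (q n00 n10 n01 n11 : nat)
    (C1 : 'rV[R]_q -> 'M[R]_(n00, n01)) (D1 : 'rV[R]_q -> 'M[R]_(n01, n00))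
    (C2 : 'rV[R]_q -> 'M[R]_(n10, n11)) (D2 : 'rV[R]_q -> 'M[R]_(n11, n10))
    (w : 'rV[R]_q) : 'M[R]_((n00 + n10) + (n01 + n11)) :=
  block_mx 0 (block_mx (C1 w) 0 0 (C2 w)) (block_mx (D1 w) 0 0 (D2 w)) 0.

From HB Require Import structures.
From mathcomp Require Import all_boot all_order all_algebra.
From mathcomp Require Import reals.
Set Implicit Arguments. Unset Strict Implicit. Unset Printing Implicit Defensive.
Import Order.TTheory GRing.Theory Num.Theory.
Local Open Scope ring_scope.

(* In a rank-4 quasiNil-algebra the only triple product that can be nonzero
   lands in N_14, so associativity is the single identity
   mu_134(mu_123(v, s), w) = mu_124(v, mu_234(s, w)), i.e. A1 v C2 w = C1 w A2 v.
   Commutation of the block actions on S amounts to this identity and three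
   more; each of these follows from the previous one by multiplying it on both
   sides with the Clifford partners B (resp. D), which by b x a x = -|x|^2 are
   inverses of A (resp. C) up to the same scalar. *)

Section Euclidean.
Variables (R : realType) (n : nat).
Implicit Types u v : 'rV[R]_n.

Lemma dot_self_ge0 u : 0 <= dot u u.
Proof.
by rewrite /dot mxE; apply: sumr_ge0 => i _; rewrite mxE -expr2 sqr_ge0.
Qed.

Lemma dot_self_eq0 u : dot u u = 0 -> u = 0.
Proof.
rewrite /dot mxE => u2_eq0; apply/rowP => i; rewrite mxE.
have sq_ge0 j : xpredT j -> 0 <= u 0 j * u^T j 0 by rewrite mxE -expr2 sqr_ge0.
have := @psumr_eq0P _ _ xpredT (fun j => u 0 j * u^T j 0) sq_ge0 u2_eq0 i isT.
by rewrite mxE -expr2 => /eqP; rewrite sqrf_eq0 => /eqP.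
Qed.

Lemma dotZr u v c : dot u (c *: v) = c * dot u v.
Proof. by rewrite /dot linearZ /= -scalemxAr mxE. Qed.

End Euclidean.

Section Bilinear.
Variables (R : realType) (p q r : nat) (f : 'rV[R]_p -> 'rV[R]_q -> 'rV[R]_r).
Hypothesis f_bilin : bilinear_map f.

Lemma bilinear_map0l y : f 0 y = 0.
Proof.
have := f_bilin.1 1 0 0 y.
by rewrite !scale1r addr0 -{1}[f 0 y]addr0 => /addrI <-.
Qed.

Lemma bilinear_map0r x : f x 0 = 0.
Proof.
have := f_bilin.2 1 x 0 0.
by rewrite !scale1r addr0 -{1}[f x 0]addr0 => /addrI <-.
Qed.

End Bilinear.

Lemma associative4P (R : realType) (d12 d13 d14 d23 d24 d34 : nat)
    (m123 : 'rV[R]_d12 -> 'rV[R]_d23 -> 'rV[R]_d13)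
    (m124 : 'rV[R]_d12 -> 'rV[R]_d24 -> 'rV[R]_d14)
    (m134 : 'rV[R]_d13 -> 'rV[R]_d34 -> 'rV[R]_d14)
    (m234 : 'rV[R]_d23 -> 'rV[R]_d34 -> 'rV[R]_d24) :
  bilinear_map m123 -> bilinear_map m124 ->
  bilinear_map m134 -> bilinear_map m234 ->
  associative4 m123 m124 m134 m234 <->
  (forall x y z, m134 (m123 x y) z = m124 x (m234 y z)).
Proof.
move=> b123 b124 b134 b234.
have zero := (bilinear_map0l b123, bilinear_map0l b124, bilinear_map0l b234,
              bilinear_map0r b123, bilinear_map0r b134, bilinear_map0r b234).
split=> [assoc x y z | mu_assoc [? ? ? ? ? ?] [? ? ? ? ? ?] [? ? ? ? ? ?]].
  have := congr1 (@e14 _ _ _ _ _ _ _)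
    (assoc (E4 x 0 0 0 0 0) (E4 0 0 0 y 0 0) (E4 0 0 0 0 0 z)).
  by rewrite /mul4 /= !zero add0r addr0.
by rewrite /mul4 /= !zero add0r addr0 mu_assoc.
Qed.

Section CliffordModule.
Variables (R : realType) (p m k : nat).
Variables (a : 'rV[R]_p -> 'M[R]_(m, k)) (b : 'rV[R]_p -> 'M[R]_(k, m)).
Hypothesis ab_cl : cl_module a b.

Lemma cl_module_b0 : b 0 = 0.
Proof.
case: ab_cl => _ b_lin _ _ _; have := b_lin 1 0 0.
by rewrite !scale1r addr0 -{1}[b 0]addr0 => /addrI <-.
Qed.

Lemma bilinear_cl_actl : bilinear_map (fun x (s : 'rV[R]_m) => s *m a x).
Proof.
case: ab_cl => a_lin _ _ _ _; split=> c x x' y.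
  by rewrite a_lin mulmxDr scalemxAr.
by rewrite mulmxDl scalemxAl.
Qed.

Lemma bilinear_cl_actr : bilinear_map (fun (s : 'rV[R]_m) x => s *m a x).
Proof.
by case: bilinear_cl_actl => lin_x lin_s; split=> c *; [apply: lin_s | apply: lin_x].
Qed.

Lemma enorm_cl_act x (s : 'rV[R]_m) : enorm (s *m a x) = enorm x * enorm s.
Proof.
case: ab_cl => _ _ ab _ skew.
rewrite /enorm skew -mulmxA ab scalemx1 mul_mx_scalar dotZr mulNr opprK.
by rewrite sqrtrM ?dot_self_ge0.
Qed.

Lemma norm_mult_cl_actl : norm_mult (fun x (s : 'rV[R]_m) => s *m a x).
Proof. exact: enorm_cl_act. Qed.

Lemma norm_mult_cl_actr : norm_mult (fun (s : 'rV[R]_m) x => s *m a x).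
Proof. by move=> s x; rewrite enorm_cl_act mulrC. Qed.

End CliffordModule.

Lemma cl_module_intertwine (R : realType) (p m k m' k' : nat)
    (a : 'rV[R]_p -> 'M[R]_(m, k)) (b : 'rV[R]_p -> 'M[R]_(k, m))
    (a' : 'rV[R]_p -> 'M[R]_(m', k')) (b' : 'rV[R]_p -> 'M[R]_(k', m'))
    (x : 'rV[R]_p) (M : 'M[R]_(k, k')) (N : 'M[R]_(m, m')) :
  cl_module a b -> cl_module a' b' ->
  a x *m M = N *m a' x -> M *m b' x = b x *m N.
Proof.
move=> ab_cl ab_cl' intertw.
have [x0 | ] := eqVneq (dot x x) 0.
  by rewrite (dot_self_eq0 x0) (cl_module_b0 ab_cl) (cl_module_b0 ab_cl') mulmx0 mul0mx.
rewrite -oppr_eq0 => nx0; apply: (scalerI nx0).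
case: ab_cl => _ _ _ /(_ x) ba _; case: ab_cl' => _ _ /(_ x) ab' _ _.
rewrite scalemx1 in ba; rewrite scalemx1 in ab'.
rewrite -mul_scalar_mx -mul_mx_scalar -ba -ab'.
by rewrite !mulmxA -(mulmxA (b x)) intertw -!mulmxA.
Qed.

Section BlockActions.
Variables (R : realType) (p q n00 n10 n01 n11 : nat).
Variables (A1 : 'rV[R]_p -> 'M[R]_(n00, n10)) (B1 : 'rV[R]_p -> 'M[R]_(n10, n00)).
Variables (A2 : 'rV[R]_p -> 'M[R]_(n01, n11)) (B2 : 'rV[R]_p -> 'M[R]_(n11, n01)).
Variables (C1 : 'rV[R]_q -> 'M[R]_(n00, n01)) (D1 : 'rV[R]_q -> 'M[R]_(n01, n00)).
Variables (C2 : 'rV[R]_q -> 'M[R]_(n10, n11)) (D2 : 'rV[R]_q -> 'M[R]_(n11, n10)).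

Lemma actV10_actV01_commP v w :
  actV10 A1 B1 A2 B2 v *m actV01 C1 D1 C2 D2 w
    = actV01 C1 D1 C2 D2 w *m actV10 A1 B1 A2 B2 v <->
  [/\ A1 v *m C2 w = C1 w *m A2 v, B1 v *m C1 w = C2 w *m B2 v,
      A2 v *m D2 w = D1 w *m A1 v & B2 v *m D1 w = D2 w *m B1 v].
Proof.
rewrite /actV10 /actV01 !mulmx_block !mul0mx !mulmx0 !add0r !addr0.
split=> [/eq_block_mx[_ /eq_block_mx[_ -> -> _] /eq_block_mx[_ -> -> _] _] //|].
by case=> -> -> -> ->.
Qed.

Hypotheses (A1_cl : cl_module A1 B1) (A2_cl : cl_module A2 B2).
Hypotheses (C1_cl : cl_module C1 D1) (C2_cl : cl_module C2 D2).

Lemma actV10_actV01_comm v w :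
  A1 v *m C2 w = C1 w *m A2 v ->
  actV10 A1 B1 A2 B2 v *m actV01 C1 D1 C2 D2 w
    = actV01 C1 D1 C2 D2 w *m actV10 A1 B1 A2 B2 v.
Proof.
move=> AC; apply/actV10_actV01_commP.
have AD := cl_module_intertwine C1_cl C2_cl (esym AC).
split=> //; first exact/esym/(cl_module_intertwine A1_cl A2_cl).
exact/esym/(cl_module_intertwine A2_cl A1_cl).
Qed.

End BlockActions.

Arguments actV10_actV01_commP {R p q n00 n10 n01 n11 A1 B1 A2 B2 C1 D1 C2 D2 v w}.

Theorem mainTheorem12 (R : realType) (p q n00 n10 n01 n11 : nat)
    (A1 : 'rV[R]_p -> 'M[R]_(n00, n10)) (B1 : 'rV[R]_p -> 'M[R]_(n10, n00))
    (A2 : 'rV[R]_p -> 'M[R]_(n01, n11)) (B2 : 'rV[R]_p -> 'M[R]_(n11, n01))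
    (C1 : 'rV[R]_q -> 'M[R]_(n00, n01)) (D1 : 'rV[R]_q -> 'M[R]_(n01, n00))
    (C2 : 'rV[R]_q -> 'M[R]_(n10, n11)) (D2 : 'rV[R]_q -> 'M[R]_(n11, n10)) :
  (0 < p)%N -> (0 < q)%N ->
  (0 < n00)%N -> (0 < n10)%N -> (0 < n01)%N -> (0 < n11)%N ->
  cl_module A1 B1 -> cl_module A2 B2 -> cl_module C1 D1 -> cl_module C2 D2 ->
  let m123 := fun (v : 'rV[R]_p) (s : 'rV[R]_n00) => s *m A1 v in
  let m124 := fun (v : 'rV[R]_p) (s : 'rV[R]_n01) => s *m A2 v in
  let m234 := fun (s : 'rV[R]_n00) (w : 'rV[R]_q) => s *m C1 w in
  let m134 := fun (s : 'rV[R]_n10) (w : 'rV[R]_q) => s *m C2 w in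
  is_quasiNil4 m123 m124 m134 m234 /\
  (associative4 m123 m124 m134 m234 <->
   forall (v : 'rV[R]_p) (w : 'rV[R]_q),
     actV10 A1 B1 A2 B2 v *m actV01 C1 D1 C2 D2 w
     = actV01 C1 D1 C2 D2 w *m actV10 A1 B1 A2 B2 v).
Proof.
(* The summands need not be nonzero. *)
move=> _ _ _ _ _ _ A1_cl A2_cl C1_cl C2_cl m123 m124 m234 m134.
have b123 := bilinear_cl_actl A1_cl; have b124 := bilinear_cl_actl A2_cl.
have b134 := bilinear_cl_actr C2_cl; have b234 := bilinear_cl_actr C1_cl.
split.
  split; split=> //.
  - exact: norm_mult_cl_actl A1_cl.
  - exact: norm_mult_cl_actl A2_cl.
  - exact: norm_mult_cl_actr C2_cl.
  - exact: norm_mult_cl_actr C1_cl.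
rewrite associative4P //; split=> [assoc v w | comm v s w].
  apply: actV10_actV01_comm => //; apply/eqP/mulmxP => s.
  by rewrite !mulmxA; apply: assoc.
by have [+ _ _ _] := actV10_actV01_commP.1 (comm v w); rewrite /m134 /m123 /m124 /m234 -!mulmxA => ->.
Qed.
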